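(* Let $N\ge2$ and $T,\mu>0$. Let $x(t)=(x_1(t),\dots,x_N(t))$, $x_i(t)\in\mathbb{R}$, be a (Carathéodory) solution of $$\dot x_i(t)=\frac1N\sum_{j=1}^N M_{ij}(t)(x_j-x_i),\qquad i=1,\dots,N,$$ with Lebesgue measurable $M_{ij}:[0,+\infty)\to[0,1]$, and let $\alpha:=\min_{j}x_j(0)$. Let $k\ge1$ and assume that the $(T,\mu)$-connectivity graph $G(t)$ contains the directed path $i_0\to i_1\to\dots\to i_k$ for all times $t=0,T,\dots,(k-1)T$. Then for all $t\ge kT$ and all $l\in\{0,\dots,k\}$, $$x_{i_l}(t)\ge\alpha+\eta^k\exp\!\left(-2\tfrac{N-1}{N}t\right)(x_{i_k}(0)-\alpha),\qquad \eta:=\frac{\mu T}{N+\mu T}.$$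
   Context: Given $T,\mu>0$, the $(T,\mu)$-connectivity graph at time $t\ge0$ is the directed graph $G(t)$ on nodes $\{1,\dots,N\}$ in which the arrow $i\to j$ exists iff $\frac1T\int_t^{t+T}M_{ij}(s)\,ds\ge\mu$. *)

From HB Require Import structures.
From mathcomp Require Import all_boot all_order all_algebra.
From mathcomp Require Import all_classical all_reals all_analysis.
Set Implicit Arguments. Unset Strict Implicit. Unset Printing Implicit Defensive.
Import Order.TTheory GRing.Theory Num.Theory.
Local Open Scope classical_set_scope.
Local Open Scope ring_scope.

Definition rhs {R : realType} {N : nat} (M : 'I_N -> 'I_N -> R -> R)
  (x : 'I_N -> R -> R) (i : 'I_N) (s : R) : R :=
  N%:R^-1 * \sum_(j < N) M i j s * (x j s - x i s).

(* Caratheodory solution on [0, +oo): for every i and t >= 0, the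
   right-hand side is Lebesgue integrable on [0,t] and
   x_i(t) = x_i(0) + int_0^t rhs_i(s) ds  (equivalently: x_i is absolutely
   continuous on compacts and satisfies the ODE almost everywhere). *)
Definition caratheodory_solution {R : realType} {N : nat}
  (M : 'I_N -> 'I_N -> R -> R) (x : 'I_N -> R -> R) : Prop :=
  forall (i : 'I_N) (t : R), 0 <= t ->
    (@lebesgue_measure R).-integrable `[0, t] (fun s => (rhs M x i s)%:E) /\
    x i t = x i 0 + Rintegral (@lebesgue_measure R) `[0, t] (rhs M x i).

Definition conn_arrow {R : realType} {N : nat}
  (M : 'I_N -> 'I_N -> R -> R) (T mu t : R) (i j : 'I_N) : Prop :=
  T^-1 * Rintegral (@lebesgue_measure R) `[t, t + T] (M i j) >= mu.

From mathcomp Require Import all_boot all_order all_algebra.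
From mathcomp Require Import all_classical all_reals all_analysis.
From mathcomp Require Import ring lra.
Import Order.TTheory GRing.Theory Num.Theory.
Import numFieldNormedType.Exports.
Local Open Scope classical_set_scope.
Local Open Scope ring_scope.

(** Write [gap j t := x j t - alpha] and [a := (N - 1) / N].  A first-zero
    argument shows that the gaps stay nonnegative.  As the weights lie in
    [0, 1], the equation then gives [gap_i' >= M_ij gap_j / N - a gap_i] for
    every [j <> i]; comparing with the exponential solution (again by a
    first-zero argument, as [x] is only absolutely continuous) yields the decay
    bound [gap_i t >= exp (- a (t - s)) gap_i s] and, over a window
    [t0, t0 + T] carrying the arrow [i -> j],
    [gap_i (t0 + T) >= exp (- a T) (mu T / N) gap_j t0].  Following the path
    backwards from [i_k], one window at a time, gives
    [gap_(i_l) ((k - l) T) >= (exp (- a T) mu T / N) ^ (k - l) gap_(i_k) 0];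
    decay up to [t], [eta <= mu T / N] and [exp (- a t) >= exp (- 2 a t)]
    conclude. *)

Section continuity.
Context {R : realType}.
Implicit Types (s t u : R) (f : R -> R).

Lemma near_within_itv_dist {P : R -> Prop} {s t u} :
  (\forall w \near within `[s, t] (nbhs u), P w) ->
  exists2 d, 0 < d & forall w, s <= w <= t -> `|w - u| < d -> P w.
Proof.
move=> /nbhs_ballP[d d0 hd]; exists d => // w wst wu.
by apply: hd; [rewrite /ball /= distrC | rewrite /= in_itv].
Qed.

Lemma near_within_itv_left {P : R -> Prop} {s t u} : s < u <= t ->
  (\forall w \near within `[s, t] (nbhs u), P w) ->
  exists2 v, s <= v < u & forall w, v <= w <= u -> P w.
Proof.
move=> /andP[su ut] /near_within_itv_dist[d d0 hd].
have sv : s <= Num.max s (u - d / 2) by rewrite le_max lexx.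
have dv : u - d / 2 <= Num.max s (u - d / 2) by rewrite le_max lexx orbT.
have vu : Num.max s (u - d / 2) < u by rewrite gt_max su /=; lra.
exists (Num.max s (u - d / 2)) => [|w /andP[vw wu]]; first by rewrite sv.
by apply: hd; [apply/andP; split | rewrite ler0_norm]; lra.
Qed.

Lemma within_continuous_near_dist {f s t u e} :
  {within `[s, t], continuous f} -> s <= u <= t -> 0 < e ->
  \forall w \near within `[s, t] (nbhs u), `|f w - f u| < e.
Proof.
move=> cf ust e0.
have cfu : f @ within `[s, t] (nbhs u) --> f u.
  by have := (subspace_continuousP _ _).1 cf u; rewrite /= in_itv; apply.
by apply: filterS (cvgr_dist_lt _ _ cfu _ e0) => w; rewrite distrC.
Qed.

Lemma first_zero_barrier (I : finType) (phi : I -> R -> R) s t :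
  (forall j, {within `[s, t], continuous phi j}) -> (forall j, 0 < phi j s) ->
  (forall i u, s < u <= t -> phi i u = 0 ->
     (forall j v, s <= v < u -> 0 < phi j v) -> (forall j, 0 <= phi j u) -> False) ->
  forall j u, s <= u <= t -> 0 < phi j u.
Proof.
move=> cphi phi_s no_first j0 u0 /andP[su0 u0t]; rewrite ltNge; apply/negP => bad0.
pose A := [set v | s <= v <= t /\ exists j, phi j v <= 0].
have A_lb : has_lbound A by exists s => v [/andP[]].
have A_u0 : A u0 by split; [apply/andP | exists j0].
pose z := inf A.
have sz : s <= z by apply: lb_le_inf; [exists u0 | move=> v [/andP[]]].
have zst : s <= z <= t by rewrite sz (le_trans (ge_inf A_lb A_u0)).
have before_z j v : s <= v < z -> 0 < phi j v.
  move=> /andP[sv vz]; rewrite ltNge; apply/negP => bad.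
  have : z <= v by apply: ge_inf => //; split; [apply/andP; split; lra | exists j].
  lra.
have s_lt_z j : phi j z <= 0 -> s < z.
  by move=> zj; rewrite lt_neqAle sz andbT; apply: contraTneq zj => <-; rewrite -ltNge.
have at_z j : 0 <= phi j z.
  rewrite leNgt; apply/negP => neg; have negz : 0 < - phi j z by rewrite oppr_gt0.
  have [|v /andP[sv vz] hv] :=
    near_within_itv_left _ (within_continuous_near_dist (cphi j) zst negz).
    by rewrite (s_lt_z j) ?(ltW neg) //=; case/andP: zst.
  have := hv v; rewrite lexx ltW // ltr_norml => /(_ isT)/andP[_].
  by have := before_z j v; rewrite sv vz => /(_ isT); lra.
have [i zi] : exists i, phi i z <= 0.
  apply/not_existsP => pos; have {}pos j : 0 < phi j z by rewrite ltNge; apply/negP/pos.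
  have /near_within_itv_dist[d d0 hd] : \forall w \near within `[s, t] (nbhs z),
      forall j, `|phi j w - phi j z| < phi j z.
    by apply: filter_forall => j; exact: within_continuous_near_dist.
  suff : z + d <= z by lra.
  apply: lb_le_inf; first by exists u0.
  move=> v [vst [j vj]]; rewrite leNgt; apply/negP => vzd.
  have zv : z <= v by apply: ge_inf => //; split => //; exists j.
  have vzd' : `|v - z| < d by rewrite ger0_norm; lra.
  by have := hd v vst vzd' j; rewrite ltr_norml => /andP[]; lra.
have zi0 : phi i z = 0 by apply/le_anti; rewrite zi at_z.
by apply: (no_first i z) => //; rewrite (s_lt_z i) //=; case/andP: zst.
Qed.

Lemma within_continuous_cst (A : set R) (c : R) : {within A, continuous (fun=> c)}.
Proof. by apply: continuous_subspaceT; exact: cst_continuous. Qed.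

Lemma within_continuousM (A : set R) f (g : R -> R) :
  {within A, continuous f} -> {within A, continuous g} ->
  {within A, continuous (fun w => f w * g w)}.
Proof. by move=> cf cg w; apply: continuousM; [exact: cf | exact: cg]. Qed.

Lemma continuous_expR_affine (c b : R) : continuous (fun w => expR (c * (w - b))).
Proof.
move=> w; apply: continuous_comp; last exact: continuous_expR.
apply: cvgM; first exact: cvg_cst.
by apply: cvgB; [exact: cvg_id | exact: cvg_cst].
Qed.

(** The increment hypothesis is the integrated form of the differential
    inequality [y' >= expR (- a (t - t0)) H' - a y]. *)
Lemma comparison_expR (y H : R -> R) (a t0 t1 : R) : 0 <= a ->
  {within `[t0, t1], continuous y} -> {within `[t0, t1], continuous H} ->
  H t0 <= y t0 -> (forall w, t0 <= w <= t1 -> 0 <= H w) ->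
  (forall v u B, t0 <= v -> v <= u <= t1 -> (forall w, v <= w <= u -> y w <= B) ->
     expR (- a * (u - t0)) * (H u - H v) - a * B * (u - v) <= y u - y v) ->
  forall t, t0 <= t <= t1 -> expR (- a * (t - t0)) * H t <= y t.
Proof.
move=> a0 cy cH Hy0 H0 incr t t_in; apply/ler_addgt0Pr => eps eps0.
pose e w := expR (- a * (w - t0)).
pose phi (_ : unit) w := y w - e w * H w + eps.
suff : 0 < phi tt t by rewrite /phi /e; lra.
apply: (@first_zero_barrier _ phi t0 t1 _ _ _ tt t t_in).
- move=> []; apply: within_continuousD.
    apply: within_continuousB => //; apply: within_continuousM => //.
    exact/continuous_subspaceT/continuous_expR_affine.
  exact: within_continuous_cst.
- by move=> []; rewrite /phi /e subrr mulr0 expR0 mul1r; lra.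
move=> [] u /andP[t0u ut1] phiu before _.
have ust : t0 <= u <= t1 by rewrite ut1 ltW.
have eps3 : 0 < eps / 3 by lra.
have near_u : \forall w \near within `[t0, t1] (nbhs u),
    `|y w - y u| < eps / 3 /\ `|H w - H u| < eps / 3.
  exact: filterI (within_continuous_near_dist cy ust eps3)
                 (within_continuous_near_dist cH ust eps3).
have [|v /andP[t0v vu] close] := near_within_itv_left _ near_u; first by rewrite t0u.
have := before tt v; rewrite t0v vu => /(_ isT).
rewrite /phi /e in phiu * => phiv.
set eu := expR (- a * (u - t0)) in phiu *; set ev := expR (- a * (v - t0)) in phiv *.
have eu0 : 0 < eu := expR_gt0 _.
have eu1 : eu <= 1 by rewrite expR_le1 mulNr oppr_le0 mulr_ge0 // subr_ge0 ltW.
have Hv : eu * H u - eps / 3 < eu * H v.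
  have /close[_] : v <= v <= u by rewrite lexx ltW.
  rewrite ltr_norml => /andP[Huv _].
  have : eu * (H u - eps / 3) < eu * H v by rewrite ltr_pM2l //; lra.
  have : eu * (eps / 3) <= eps / 3 by rewrite ler_piMl // ltW.
  by rewrite mulrBr; lra.
have y_le w : v <= w <= u -> y w <= eu * H v.
  by move=> /close[+ _]; rewrite ltr_norml => /andP[_]; lra.
have := incr v u _ t0v _ y_le; rewrite ltW //= => /(_ ut1).
have evu : eu * (a * (u - v)) <= ev - eu.
  have -> : ev = eu * expR (a * (u - v)) by rewrite -expRD; congr expR; ring.
  have := ler_wpM2l (ltW eu0) (expR_ge1Dx (a * (u - v))).
  by rewrite mulrDr mulr1; lra.
have := ler_wpM2r (H0 v _) evu; rewrite t0v (le_trans (ltW vu)) // => /(_ isT).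
have -> : a * (eu * H v) * (u - v) = eu * (a * (u - v)) * H v by ring.
by rewrite -/eu [eu * (H u - H v)]mulrBr mulrBl; lra.
Qed.

End continuity.

Section rhs_bounds.
Context {R : realType} {N : nat} {M : 'I_N -> 'I_N -> R -> R}.
Context {z : 'I_N -> R -> R} {i : 'I_N} {s : R}.
Hypothesis M01 : forall j, 0 <= M i j s <= 1.

Lemma rhs_subr (c : R) : rhs M (fun j w => z j w - c) i s = rhs M z i s.
Proof. by congr (_ * _); apply: eq_bigr => j _; congr (_ * _); ring. Qed.

Let N_gt0 : 0 < N%:R :> R.
Proof. by rewrite ltr0n (leq_ltn_trans _ (ltn_ord i)). Qed.

Lemma rhs_ge_spread (d : R) : 0 <= d -> (forall j, - d <= z j s - z i s) ->
  - d <= rhs M z i s.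
Proof.
move=> d0 zd.
have -> : - d = N%:R^-1 * \sum_(j < N) (- d).
  by rewrite sumr_const card_ord -[(- d) *+ _]mulr_natl mulKf // gt_eqF.
apply: ler_wpM2l; first by rewrite invr_ge0 ltW.
apply: ler_sum => j _; have /andP[M0 M1] := M01 j.
by have := zd j; case: (lerP 0 (z j s - z i s)) => zji; nra.
Qed.

Lemma rhs_ge_partial_sum (P : pred 'I_N) : ~~ P i -> (forall j, 0 <= z j s) ->
  N%:R^-1 * \sum_(j | P j) M i j s * z j s - (N%:R - 1) / N%:R * z i s
    <= rhs M z i s.
Proof.
move=> Pi z0.
have N1z : (N%:R - 1) * z i s = \sum_(j < N) (if j != i then z i s else 0).
  rewrite -big_mkcond sumr_const cardC1 card_ord -[z i s *+ _]mulr_natl.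
  by rewrite -{1}(prednK (leq_ltn_trans (leq0n i) (ltn_ord i))) mulrSr addrK.
have -> : (N%:R - 1) / N%:R * z i s = N%:R^-1 * ((N%:R - 1) * z i s) by ring.
rewrite /rhs -mulrBr ler_pM2l ?invr_gt0 // N1z big_mkcond -sumrB.
apply: ler_sum => j _; have /andP[M0 M1] := M01 j; have zj := z0 j; have zi := z0 i.
have [->|_] := eqVneq j i; first by rewrite (negbTE Pi) /= !subrr mulr0.
by case: (P j) => /=; nra.
Qed.

End rhs_bounds.

Lemma rate_ge0 {R : realType} (N : nat) : 0 <= (N%:R - 1) / N%:R :> R.
Proof. by case: N => [|n]; rewrite ?invr0 ?mulr0 // divr_ge0 // subr_ge0 ler1n. Qed.

Section integral_bounds.
Context {R : realType}.
Local Notation mu := (@lebesgue_measure R).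

Lemma lebesgue_measure_itv_lty (b1 b2 : bool) (v u : R) :
  (mu [set` Interval (BSide b1 v) (BSide b2 u)] < +oo)%E.
Proof. by rewrite lebesgue_measure_itv; case: ifP => _; rewrite -?EFinB ltry. Qed.

Lemma ler_Rintegral_affine {F G : R -> R} (c1 c2 : R) {v u : R} : v <= u ->
  mu.-integrable `]v, u] (EFin \o F) -> mu.-integrable `]v, u] (EFin \o G) ->
  (forall w, v < w <= u -> c1 * G w + c2 <= F w) ->
  c1 * Rintegral mu `]v, u] G + c2 * (u - v) <= Rintegral mu `]v, u] F.
Proof.
move=> vu iF iG FG.
have ic2 : mu.-integrable `]v, u] (EFin \o cst c2).
  apply: measurable_bounded_integrable => //; first exact: lebesgue_measure_itv_lty.
  by exists `|c2|; split => // ? ? ? _; apply: ltW.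
have iG1 : mu.-integrable `]v, u] (EFin \o (fun w => c1 * G w)).
  apply: (@eq_integrable _ _ _ mu _ (measurable_itv _) (fun w => c1%:E * (G w)%:E)%E).
    by move=> w _ /=; rewrite EFinM.
  exact: integrableZl.
have iH : mu.-integrable `]v, u] (EFin \o (fun w => c1 * G w + c2)).
  apply: (@eq_integrable _ _ _ mu _ (measurable_itv _)
    ((EFin \o (fun w => (c1 * G w)%R)) \+ (EFin \o cst c2))%E) => //.
  exact: integrableD.
have -> : c2 * (u - v) = Rintegral mu `]v, u] (cst c2).
  rewrite Rintegral_cst //; have /= -> := lebesgue_measure_itv `]v, u].
  by rewrite lte_fin; case: ltgtP vu => // -> _; rewrite subrr /= !mulr0.
by rewrite -RintegralZl // -RintegralD //; apply: le_Rintegral.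
Qed.

End integral_bounds.

Lemma conn_arrow_Rintegral {R : realType} {N : nat} {M : 'I_N -> 'I_N -> R -> R}
    {T mu t : R} {i j : 'I_N} :
  0 < T -> conn_arrow M T mu t i j ->
  mu * T <= Rintegral lebesgue_measure `[t, t + T] (M i j).
Proof. by move=> T0; rewrite /conn_arrow ler_pdivlMl // mulrC. Qed.

Section consensus.
Context {R : realType} {N : nat} {M : 'I_N -> 'I_N -> R -> R}.
Context {x : 'I_N -> R -> R} {alpha : R}.
Local Notation mu := (@lebesgue_measure R).
Hypothesis M_meas : forall i j, measurable_fun `[(0:R), +oo[ (M i j).
Hypothesis M01 : forall i j s, 0 <= s -> 0 <= M i j s <= 1.
Hypothesis x_sol : caratheodory_solution M x.
Hypothesis alpha_le : forall j, alpha <= x j 0.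

Let gap j t := x j t - alpha.
Let a : R := (N%:R - 1) / N%:R.

Lemma integrable_M i j b1 b2 (v u : R) : 0 <= v ->
  mu.-integrable [set` Interval (BSide b1 v) (BSide b2 u)] (EFin \o M i j).
Proof.
move=> v0; have sub : [set` Interval (BSide b1 v) (BSide b2 u)] `<=` `[0, +oo[.
  by apply: subset_itv; rewrite bnd_simp.
apply: measurable_bounded_integrable => //; first exact: lebesgue_measure_itv_lty.
  exact: measurable_funS (M_meas i j).
exists 1; split => // r r1 w /sub; rewrite /= in_itv /= andbT => w0.
by have /andP[M0 M1] := M01 i j _ w0; rewrite ger0_norm // (le_trans M1) ?ltW.
Qed.

Lemma integrable_rhs i (v u : R) : 0 <= v ->
  mu.-integrable `]v, u] (EFin \o rhs M x i).
Proof.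
move=> v0; have w0 : 0 <= Num.max u v by rewrite le_max v0 orbT.
apply: (integrableS _ _ _ (x_sol i _ w0).1) => //.
by apply: subset_itv; rewrite bnd_simp // le_max lexx.
Qed.

Lemma gap_increment i (v u : R) : 0 <= v <= u ->
  gap i u - gap i v = Rintegral mu `]v, u] (rhs M x i).
Proof.
move=> /andP[v0 vu]; have u0 : 0 <= u := le_trans v0 vu.
rewrite /gap (x_sol i _ u0).2 (x_sol i _ v0).2.
by rewrite -(Rintegral_itvB (x_sol i _ u0).1) ?bnd_simp //; ring.
Qed.

Lemma continuous_gap i (s t : R) : 0 <= s <= t -> {within `[s, t], continuous gap i}.
Proof.
move=> /andP[s0 st]; have t0 : 0 <= t := le_trans s0 st.
apply: (@continuous_subspaceW _ _ _ `[0, t]).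
  by apply: subset_itvr; rewrite bnd_simp.
apply: (@subspace_eq_continuous _ `[0, t] _
  (fun w => x i 0 - alpha + Rintegral mu `[0, w] (rhs M x i))).
  move=> w; rewrite inE /= in_itv /= => /andP[w0 _].
  by rewrite /from_subspace /gap (x_sol i _ w0).2; ring.
apply: within_continuousD; first exact: within_continuous_cst.
exact: parameterized_integral_continuous (x_sol i _ t0).1.
Qed.

(** The slack [eps * (1 + w)] increases at rate [eps]: at a first zero of
    [gap i + slack] the gap must decrease at least that fast, whereas the
    equation only lets it decrease at rate [eps / 2] there. *)
Lemma gap_ge0 j (t : R) : 0 <= t -> 0 <= gap j t.
Proof.
move=> t0; apply/ler_addgt0Pr => e e0.
pose eps := e / (1 + t); have eps0 : 0 < eps by rewrite divr_gt0 //; lra.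
have -> : e = eps * (1 + t) by rewrite /eps divfK // gt_eqF //; lra.
pose phi j w := gap j w + eps * (1 + w).
suff : 0 < phi j t by rewrite /phi; lra.
apply: (@first_zero_barrier _ _ phi 0 t); last by apply/andP.
- move=> k; apply: within_continuousD; first by apply: continuous_gap; apply/andP.
  apply: within_continuousM; first exact: within_continuous_cst.
  apply: within_continuousD; first exact: within_continuous_cst.
  by apply: continuous_subspaceT => w; exact: cvg_id.
- by move=> k; rewrite /phi /gap addr0 mulr1; have := alpha_le k; lra.
move=> i u /andP[u0 ut] phiu before after.
have eps2 : 0 < eps / 2 by lra.
have ci : {within `[0, t], continuous gap i} by apply: continuous_gap; rewrite lexx.
have ust : 0 <= u <= t by rewrite ut ltW.
have [|v /andP[v0 vu] close] := near_within_itv_left _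
  (within_continuous_near_dist ci ust eps2); first by rewrite u0.
have : - (eps / 2) * (u - v) <= gap i u - gap i v.
  rewrite gap_increment ?v0 ?(ltW vu) //.
  have := ler_Rintegral_affine 0 (- (eps / 2)) (ltW vu)
    (integrable_rhs i v u v0) (integrable_rhs i v u v0).
  rewrite mul0r add0r; apply=> w /andP[vw wu]; rewrite mul0r add0r.
  have w0 : 0 <= w by lra.
  rewrite -(rhs_subr alpha); apply: rhs_ge_spread => [k||k].
  - exact: M01.
  - exact: ltW.
  have gk : - (eps * (1 + w)) <= gap k w.
    have [wu'|uw] := ltP w u; first by have := before k w; rewrite w0 wu' /phi; lra.
    have -> : w = u by apply/le_anti; rewrite wu uw.
    by have := after k; rewrite /phi; lra.
  have gi : gap i w <= gap i u + eps / 2.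
    by have := close w; rewrite ltW // wu ltr_norml => /(_ isT) /andP[]; lra.
  have : eps * (1 + w) <= eps * (1 + u) by rewrite ler_pM2l // lerD2l.
  by move: phiu gk gi; rewrite /phi /gap; lra.
have := before i v; rewrite v0 vu => /(_ isT); move: phiu; rewrite /phi.
have : 0 < eps * (u - v) by rewrite mulr_gt0 // subr_gt0.
have -> : eps * (1 + u) = eps * (u - v) + eps * (1 + v) by ring.
have -> : - (eps / 2) * (u - v) = - (eps * (u - v)) / 2 by ring.
lra.
Qed.

Lemma rhs_ge_partial_gap i (P : pred 'I_N) (w : R) : ~~ P i -> 0 <= w ->
  N%:R^-1 * \sum_(j | P j) M i j w * gap j w - a * gap i w <= rhs M x i w.
Proof.
move=> Pi w0; rewrite -(rhs_subr alpha).
by apply: rhs_ge_partial_sum => // [k|k]; [exact: M01 | exact: gap_ge0].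
Qed.

Lemma gap_decay i (s t : R) : 0 <= s <= t -> expR (- a * (t - s)) * gap i s <= gap i t.
Proof.
move=> /andP[s0 st].
apply: (@comparison_expR _ (gap i) (fun=> gap i s) a s t (rate_ge0 N)).
- by apply: continuous_gap; rewrite s0.
- exact: within_continuous_cst.
- by [].
- by move=> w /andP[sw _]; apply: gap_ge0; rewrite (le_trans s0).
- move=> v u B sv /andP[vu ut] gB; rewrite subrr mulr0 sub0r -mulNr.
  have v0 : 0 <= v by rewrite (le_trans s0).
  rewrite gap_increment ?v0 //.
  have := ler_Rintegral_affine 0 (- (a * B)) vu
    (integrable_rhs i v u v0) (integrable_rhs i v u v0).
  rewrite mul0r add0r; apply=> w /andP[vw wu]; rewrite mul0r add0r.
  have w0 : 0 <= w by rewrite (le_trans v0) ?ltW.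
  apply: le_trans (rhs_ge_partial_gap i pred0 w isT w0).
  by rewrite big_pred0 // mulr0 sub0r lerN2 ler_wpM2l ?rate_ge0 // gB // (ltW vw).
by rewrite st lexx.
Qed.

Lemma gap_pull i j (t0 T : R) : j != i -> 0 <= t0 -> 0 <= T ->
  expR (- a * T) * (N%:R^-1 * gap j t0 * Rintegral mu `[t0, t0 + T] (M i j))
    <= gap i (t0 + T).
Proof.
move=> ji t00 T0.
pose H w := N%:R^-1 * gap j t0 * Rintegral mu `[t0, w] (M i j).
suff : expR (- a * (t0 + T - t0)) * H (t0 + T) <= gap i (t0 + T).
  by rewrite addrAC subrr add0r.
apply: (@comparison_expR _ (gap i) H a t0 (t0 + T) (rate_ge0 N)).
- by apply: continuous_gap; rewrite t00 lerDl.
- apply: within_continuousM; first exact: within_continuous_cst.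
  by apply: parameterized_integral_continuous; [rewrite lerDl | exact: integrable_M].
- by rewrite /H set_itv1 Rintegral_set1 mulr0; apply: gap_ge0.
- move=> w /andP[t0w _]; rewrite /H !mulr_ge0 ?invr_ge0 ?gap_ge0 //.
  apply: Rintegral_ge0 => r; rewrite /= in_itv /= => /andP[t0r _].
  by case/andP: (M01 i j _ (le_trans t00 t0r)).
- move=> v u B t0v /andP[vu ut] gB; have v0 : 0 <= v := le_trans t00 t0v.
  have -> : H u - H v = N%:R^-1 * gap j t0 * Rintegral mu `]v, u] (M i j).
    rewrite /H -mulrBr; congr (_ * _).
    by apply: Rintegral_itvB; rewrite ?bnd_simp //; exact: integrable_M.
  rewrite gap_increment ?v0 //.
  set c := expR (- a * (u - t0)) * (N%:R^-1 * gap j t0).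
  rewrite mulrA -/c -mulNr.
  apply: (ler_Rintegral_affine _ _ vu (integrable_rhs i v u v0)
    (integrable_M i j false false v u v0)).
  move=> w /andP[vw wu]; have w0 : 0 <= w by rewrite (le_trans v0) ?ltW.
  apply: le_trans (rhs_ge_partial_gap i (pred1 j) w _ w0); last by rewrite /= eq_sym.
  rewrite big_pred1_eq.
  have : expR (- a * (u - t0)) * gap j t0 <= gap j w.
    apply: le_trans (gap_decay j t0 w _); last by rewrite t00 (le_trans t0v) ?ltW.
    apply: ler_wpM2r; first exact: gap_ge0.
    by rewrite ler_expR !mulNr lerN2 ler_wpM2l ?rate_ge0 // lerD2r.
  have /andP[M0 _] := M01 i j w w0; have N0 : 0 <= N%:R^-1 :> R by rewrite invr_ge0.
  move/(ler_wpM2l (mulr_ge0 N0 M0)).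
  have : a * gap i w <= a * B by rewrite ler_wpM2l ?rate_ge0 // gB // (ltW vw).
  have -> : c * M i j w = N%:R^-1 * M i j w * (expR (- a * (u - t0)) * gap j t0).
    by rewrite /c; ring.
  by rewrite [N%:R^-1 * (_ * _)]mulrA; lra.
by rewrite lexx andbT lerDl.
Qed.

Lemma gap_path {T c : R} {k : nat} {p : 'I_k.+1 -> 'I_N} : 0 <= T -> 0 <= c ->
  injective p ->
  (forall (m : nat) (l : 'I_k.+1), (m < k)%N -> (l < k)%N ->
     c <= Rintegral mu `[m%:R * T, m%:R * T + T] (M (p l) (p (inord l.+1)))) ->
  forall (m : nat) (l : 'I_k.+1), (l + m)%N = k ->
    (expR (- a * T) * (N%:R^-1 * c)) ^+ m * gap (p ord_max) 0 <= gap (p l) (m%:R * T).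
Proof.
move=> T0 c0 p_inj arrows; elim=> [|m IH] l lm.
  have -> : l = ord_max by apply: val_inj; apply: etrans lm; rewrite addn0.
  by rewrite expr0 mul1r mul0r.
have lk : (l < k)%N.
  by apply: (@leq_trans (l + m.+1)); [rewrite addnS ltnS leq_addr | exact: eq_leq].
have mk : (m < k)%N by rewrite -lm addnS ltnS leq_addl.
pose l' : 'I_k.+1 := inord l.+1.
have l'E : nat_of_ord l' = l.+1 by rewrite /l' inordK // ltnS.
have ji : p l' != p l.
  rewrite (inj_eq p_inj); apply/eqP => /(congr1 (@nat_of_ord _)).
  by rewrite l'E => /esym/n_Sn.
have mT0 : 0 <= m%:R * T by rewrite mulr_ge0.
rewrite -natr1 mulrDl mul1r; apply: le_trans (gap_pull _ _ _ _ ji mT0 T0).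
set q := expR (- a * T) * (N%:R^-1 * c).
have -> : q ^+ m.+1 * gap (p ord_max) 0 =
    expR (- a * T) * (N%:R^-1 * (q ^+ m * gap (p ord_max) 0) * c).
  by rewrite exprS /q; ring.
apply: ler_wpM2l; first exact: expR_ge0.
have N0 : 0 <= N%:R^-1 :> R by rewrite invr_ge0.
apply: (@le_trans _ _ (N%:R^-1 * gap (p l') (m%:R * T) * c)).
  by apply: ler_wpM2r => //; apply: ler_wpM2l => //; apply: IH; rewrite l'E addSnnS.
by apply: ler_wpM2l; [rewrite mulr_ge0 // gap_ge0 | exact: arrows].
Qed.

End consensus.

Lemma ler_path_rate {R : realType} {N : nat} {a T mu t : R} {m k : nat} :
  (0 < N)%N -> 0 <= a -> 0 < T -> 0 < mu -> (m <= k)%N -> 0 <= t ->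
  (mu * T / (N%:R + mu * T)) ^+ k * expR (- 2 * a * t) <=
  expR (- a * (t - m%:R * T)) * (expR (- a * T) * (N%:R^-1 * (mu * T))) ^+ m.
Proof.
move=> N0 a0 T0 mu0 mk t0.
have muT : 0 < mu * T by rewrite mulr_gt0.
have N0' : 0 < N%:R :> R by rewrite ltr0n.
have -> : expR (- a * (t - m%:R * T)) * (expR (- a * T) * (N%:R^-1 * (mu * T))) ^+ m
    = (N%:R^-1 * (mu * T)) ^+ m * expR (- a * t).
  by rewrite exprMn -expRM_natl mulrA -expRD mulrC; congr (_ * expR _); ring.
set eta := mu * T / (N%:R + mu * T).
have eta0 : 0 <= eta by rewrite divr_ge0 // ltW // addr_gt0.
have eta1 : eta <= 1 by rewrite ler_pdivrMr ?addr_gt0 // mul1r lerDr ltW.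
have eta_le : eta <= N%:R^-1 * (mu * T).
  rewrite [X in _ <= X]mulrC; apply: ler_wpM2l; first exact: ltW.
  by rewrite lef_pV2 ?posrE ?addr_gt0 // lerDl; exact: ltW.
apply: ler_pM; [exact: exprn_ge0 | exact: expR_ge0 | |].
  apply: (@le_trans _ _ (eta ^+ m)); first exact: ler_wiXn2l.
  by apply: lerXn2r; rewrite ?nnegrE // (le_trans eta0 eta_le).
by rewrite ler_expR !mulNr lerN2 -mulrA ler_peMl ?mulr_ge0 ?ler1n.
Qed.

Theorem proposition6 (R : realType) (N : nat) (T mu : R)
  (M : 'I_N -> 'I_N -> R -> R) (x : 'I_N -> R -> R) (alpha : R)
  (k : nat) (p : 'I_k.+1 -> 'I_N) :
  (2 <= N)%N -> 0 < T -> 0 < mu ->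
  (forall i j, measurable_fun `[(0:R), +oo[ (M i j)) ->
  (forall i j s, 0 <= s -> 0 <= M i j s <= 1) ->
  caratheodory_solution M x ->
  (exists j, x j 0 = alpha) -> (forall j, alpha <= x j 0) ->
  (1 <= k)%N ->
  injective p ->
  (forall (m : nat) (l : 'I_k.+1), (m < k)%N -> (l < k)%N ->
     conn_arrow M T mu (m%:R * T) (p l) (p (inord l.+1))) ->
  forall t : R, k%:R * T <= t -> forall l : 'I_k.+1,
    x (p l) t >= alpha + (mu * T / (N%:R + mu * T)) ^+ k
                 * expR (- 2 * ((N%:R - 1) / N%:R) * t)
                 * (x (p ord_max) 0 - alpha).
Proof.
move=> N2 T0 mu0 M_meas M01 x_sol _ alpha_le _ p_inj arrows t kT l.
have lk : (l <= k)%N by rewrite -ltnS.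
have mT0 : 0 <= (k - l)%:R * T by rewrite mulr_ge0 // ltW.
have mTt : (k - l)%:R * T <= t.
  by apply: le_trans kT; apply: ler_wpM2r; [exact: ltW | rewrite ler_nat leq_subr].
have mT_in : 0 <= (k - l)%:R * T <= t by rewrite mT0 mTt.
have arrows' n l' nk l'k := conn_arrow_Rintegral T0 (arrows n l' nk l'k).
have path := gap_path M_meas M01 x_sol alpha_le (ltW T0)
  (mulr_ge0 (ltW mu0) (ltW T0)) p_inj arrows' _ l (subnKC lk).
have decay := gap_decay M01 x_sol alpha_le (p l) _ _ mT_in.
have rate := ler_path_rate (ltnW N2) (rate_ge0 N) T0 mu0 (leq_subr l k)
  (le_trans mT0 mTt).
rewrite addrC -lerBrDr; apply: le_trans decay.
apply: le_trans (ler_wpM2l (expR_ge0 _) path); rewrite [X in _ <= X]mulrA.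
by apply: ler_wpM2r rate; rewrite subr_ge0.
Qed.
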